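(* For $n\ge1$ let \[ \mathbf{M}_n=\begin{bmatrix} \frac{n}{2(2n+1)} & \frac{-3}{2n(2n+1)} & \frac{3}{2n^{3}}\\ 0 & \frac{n}{2(2n+1)} & \frac{3}{2n}\\ 0 & 0 & 1 \end{bmatrix}. \] Then the limit $\lim_{N\to\infty}\mathbf{M}_1\mathbf{M}_2\cdots\mathbf{M}_N$ exists and equals \[ \begin{bmatrix}0 & 0 & \zeta(4)\\ 0 & 0 & \zeta(2)\\ 0&0&1\end{bmatrix}. \]
   Context: $\zeta$ denotes the Riemann zeta function. *)

From HB Require Import structures.
From mathcomp Require Import all_boot all_order all_algebra.
From mathcomp Require Import all_classical all_reals all_analysis.
Set Implicit Arguments. Unset Strict Implicit. Unset Printing Implicit Defensive.
Import Order.TTheory GRing.Theory Num.Theory.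
Import numFieldNormedType.Exports.
Local Open Scope ring_scope.

Definition riemann_zeta {R : realType} (s : R) : R :=
  limn (fun N : nat => \sum_(1 <= k < N) ((k%:R : R) `^ (- s))).

Definition Mmat {R : realType} (n : nat) : 'M[R]_3 :=
  let n' : R := n%:R in
  \matrix_(i < 3, j < 3)
    match nat_of_ord i, nat_of_ord j with
    | 0, 0 => n' / (2 * (2 * n' + 1))
    | 0, 1 => - 3 / (2 * n' * (2 * n' + 1))
    | 0, 2 => 3 / (2 * n' ^+ 3)
    | 1, 1 => n' / (2 * (2 * n' + 1))
    | 1, 2 => 3 / (2 * n')
    | 2, 2 => 1
    | _, _ => 0
    end.

Definition Mlim {R : realType} : 'M[R]_3 :=
  \matrix_(i < 3, j < 3)
    match nat_of_ord i, nat_of_ord j with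
    | 0, 2 => riemann_zeta 4
    | 1, 2 => riemann_zeta 2
    | 2, 2 => 1
    | _, _ => 0
    end.

From HB Require Import structures.
From mathcomp Require Import all_boot all_order all_algebra.
From mathcomp Require Import all_classical all_reals all_analysis.
From mathcomp Require Import ring lra.
Import Order.TTheory GRing.Theory Num.Theory.
Import numFieldNormedType.Exports.
Local Open Scope ring_scope.
Local Open Scope classical_set_scope.

(* P_N = M_1 ... M_N is upper triangular, with diagonal (pdiag N, pdiag N, 1)
   and entries p01 N, p02 N, p12 N above it.  The matrices encode a Markov-WZ
   series acceleration.  For the kernel beta, with beta 0 k = k^-2, and its
   certificate certB, the sums sumB m of beta m k over k satisfy
   sumB m = mdiag m.+1 * sumB m.+1 + m12 m.+1, the boundary term m12 m.+1
   being certB m 1; iterating gives zeta(2) = sumB 0 = pdiag N * sumB N + p12 N.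
   Likewise the kernel alpha = beta * omega, with alpha 0 k = k^-4, gives
   zeta(4) = pdiag N * sumA N + p01 N * sumB N + p02 N.  As pdiag N and p01 N
   are O(1/N) while sumA and sumB stay bounded, the entries converge.  To avoid
   exchanging limits the sums are truncated at K, where the boundary terms
   certB m K.+1 leave an error O(N^2/K). *)

Lemma inv_sq_le_telescope {R : realFieldType} {x : R} : 0 <= x ->
  ((x + 1) ^+ 2)^-1 <= 2 / (x + 1) - 2 / (x + 1 + 1).
Proof.
move=> x0.
have -> : 2 / (x + 1) - 2 / (x + 1 + 1)
    = ((x + 1) ^+ 2)^-1 + x / ((x + 1) ^+ 2 * (x + 1 + 1)).
  by field; rewrite !(negbT (eqP _)) //; apply/eqP; lra.
rewrite lerDl divr_ge0 // mulr_ge0 // ?exprn_ge0 //; lra.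
Qed.

Lemma sum_inv_sq_le (R : realFieldType) K :
  \sum_(1 <= k < K.+1) (k%:R ^+ 2)^-1 <= 2 - 2 / (K%:R + 1) :> R.
Proof.
elim: K => [|K IH]; first by rewrite big_geq // add0r divr1 subrr.
rewrite big_nat_recr //= -[K.+1%:R]natr1.
have := inv_sq_le_telescope (ler0n R K); lra.
Qed.

Lemma norm_sum_le_const {R : numDomainType} (f : nat -> R) (c : R) N :
  (forall m, (m < N)%N -> `|f m| <= c) -> `|\sum_(m < N) f m| <= N%:R * c.
Proof.
move=> fc; apply: le_trans (ler_norm_sum _ _ _) _.
rewrite mulr_natl -[N in c *+ N]card_ord -sumr_const.
by apply: ler_sum => m _; apply: fc.
Qed.

Lemma cvgn_sum_inv_pow (R : realType) (p : nat) :
  cvgn (fun K => \sum_(1 <= k < K) ((k%:R : R) ^+ p.+2)^-1).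
Proof.
apply: nondecreasing_is_cvgn.
  apply/nondecreasing_seqP => -[|n]; first by rewrite !big_geq.
  by rewrite (big_nat_recr n.+1) //= lerDl invr_ge0 exprn_ge0.
exists 2 => _ [[|K] _ <-]; first by rewrite big_geq.
apply: (@le_trans _ _ (\sum_(1 <= k < K.+1) ((k%:R : R) ^+ 2)^-1)).
  apply: ler_sum_nat => k /andP[k1 _].
  have k1R : (1 : R) <= k%:R by rewrite ler1n.
  rewrite lef_pV2 ?posrE ?exprn_gt0 ?ler_weXn2l //; lra.
apply: le_trans (sum_inv_sq_le R K) _.
have : 0 <= 2 / (K%:R + 1) :> R by apply: divr_ge0; have := ler0n R K; lra.
lra.
Qed.

Lemma riemann_zeta_natE (R : realType) (p : nat) :
  riemann_zeta (p%:R : R) = limn (fun K => \sum_(1 <= k < K) ((k%:R : R) ^+ p)^-1).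
Proof.
rewrite /riemann_zeta; congr (limn _); apply/funext => K.
by apply: eq_bigr => k _; rewrite powR_invn.
Qed.

Lemma norm_limn_sub_le {R : realType} (s : nat -> R) (L e c : R) : cvgn s ->
  (forall K, `|s K.+1 - L| <= e + c / (K%:R + 1)) -> `|limn s - L| <= e.
Proof.
move=> cs sLe; apply/ler_addgt0Pr => d d0.
have lim_dist : (fun K => `|s K.+1 - L|) @ \oo --> `|limn s - L|.
  apply: cvg_norm; apply: cvgB; last exact: cvg_cst.
  by rewrite (cvg_shiftS s).
apply: (cvgr_to_le lim_dist); near=> K.
apply: le_trans (sLe K) _; rewrite lerD2l.
have K0 := ler0n R K.
have : c / d <= K%:R by near: K; exact: nbhs_infty_ger.
rewrite ler_pdivrMr // ler_pdivrMr; [nra | lra].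
Unshelve. all: by end_near.
Qed.

Lemma cvg_mx_rate {R : realType} m n (A : nat -> 'M[R]_(m, n)) (B : 'M[R]_(m, n))
    (c : R) :
  (forall N i j, `|B i j - A N i j| <= c / (N%:R + 1)) -> A @ \oo --> B.
Proof.
move=> ABc; apply/cvg_ballP => e e0; near=> N.
have N0 := ler0n R N.
have cNe : c / (N%:R + 1) < e.
  have : c / e < N%:R by near: N; exact: nbhs_infty_gtr.
  rewrite ltr_pdivrMr // ltr_pdivrMr; [nra | lra].
split=> // i j; rewrite -ball_normE /=.
exact: le_lt_trans (ABc N i j) cNe.
Unshelve. all: by end_near.
Qed.

Section MarkovWZ.
Variable R : realFieldType.
Implicit Types (m k : nat).

Definition mdiag n : R := n%:R / (2 * (2 * n%:R + 1)).
Definition m01 n : R := - 3 / (2 * n%:R * (2 * n%:R + 1)).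
Definition m02 n : R := 3 / (2 * n%:R ^+ 3).
Definition m12 n : R := 3 / (2 * n%:R).

Fixpoint pdiag N : R := if N is N'.+1 then pdiag N' * mdiag N else 1.
Fixpoint p01 N : R := if N is N'.+1 then pdiag N' * m01 N + p01 N' * mdiag N else 0.
Fixpoint p02 N : R :=
  if N is N'.+1 then pdiag N' * m02 N + p01 N' * m12 N + p02 N' else 0.
Fixpoint p12 N : R := if N is N'.+1 then pdiag N' * m12 N + p12 N' else 0.

Fixpoint beta m k : R := if m is m'.+1 then
  beta m' k * ((2 * m%:R + 1) * m%:R ^+ 2 / ((2 * m%:R - 1) * (k%:R + m%:R) ^+ 2))
  else (k%:R ^+ 2)^-1.
Fixpoint omega m k : R := if m is m'.+1 then
  omega m' k + ((k%:R + m%:R) ^+ 2)^-1 - (m%:R ^+ 2)^-1 else (k%:R ^+ 2)^-1.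
Definition alpha m k : R := beta m k * omega m k.
Definition certB m k : R := beta m k * (k%:R + (3 * m%:R + 1) / 2) / (2 * m%:R + 1).
Definition certA m k : R := certB m k * omega m k.

Definition sumB m K : R := \sum_(1 <= k < K.+1) beta m k.
Definition sumA m K : R := \sum_(1 <= k < K.+1) alpha m k.

Lemma betaSk m k : (0 < k)%N ->
  beta m k.+1 = beta m k * (k%:R ^+ 2 / (k%:R + m%:R + 1) ^+ 2).
Proof.
move=> k0; have k0R : (0 : R) < k%:R by rewrite ltr0n.
elim: m => [|m IH] /=; rewrite ?IH -!natr1.
  by field; apply/andP; split; apply/eqP; lra.
have m0R := ler0n R m.
by field; rewrite !(negbT (eqP _)) //; apply/eqP; lra.
Qed.

Lemma omegaSk m k : (0 < k)%N ->
  omega m k.+1 = omega m k - (k%:R ^+ 2)^-1 + ((k%:R + m%:R + 1) ^+ 2)^-1.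
Proof.
move=> k0; have k0R : (0 : R) < k%:R by rewrite ltr0n.
elim: m => [|m IH] /=; rewrite ?IH -!natr1.
  by field; apply/andP; split; apply/eqP; lra.
have m0R := ler0n R m.
by field; rewrite !(negbT (eqP _)) //; apply/eqP; lra.
Qed.

Lemma beta_telescope m k : (0 < k)%N ->
  beta m k - mdiag m.+1 * beta m.+1 k = certB m k - certB m k.+1.
Proof.
move=> k0; have k0R : (0 : R) < k%:R by rewrite ltr0n.
have m0R := ler0n R m.
rewrite /certB betaSk //= /mdiag -!natr1.
by field; rewrite !(negbT (eqP _)) //; apply/eqP; lra.
Qed.

Lemma alpha_telescope m k : (0 < k)%N ->
  alpha m k - mdiag m.+1 * alpha m.+1 k - m01 m.+1 * beta m.+1 k
  = certA m k - certA m k.+1.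
Proof.
move=> k0; have k0R : (0 : R) < k%:R by rewrite ltr0n.
have m0R := ler0n R m.
rewrite /certA /alpha /certB betaSk // omegaSk //= /mdiag /m01 -!natr1.
by field; rewrite !(negbT (eqP _)) //; apply/eqP; lra.
Qed.

Lemma beta_1 m : beta m 1 = (2 * m%:R + 1) / (m%:R + 1) ^+ 2.
Proof.
elim: m => [|m IH] /=; first by field.
have m0R := ler0n R m.
rewrite IH -!natr1.
by field; rewrite !(negbT (eqP _)) //; apply/eqP; lra.
Qed.

Lemma omega_1 m : omega m 1 = ((m%:R + 1) ^+ 2)^-1.
Proof.
elim: m => [|m IH] /=; first by rewrite add0r.
have m0R := ler0n R m.
rewrite IH -!natr1.
by field; rewrite !(negbT (eqP _)) //; apply/eqP; lra.
Qed.

Lemma certB_1 m : certB m 1 = m12 m.+1.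
Proof.
have m0R := ler0n R m.
rewrite /certB beta_1 /m12 -natr1.
by field; rewrite !(negbT (eqP _)) //; apply/eqP; lra.
Qed.

Lemma certA_1 m : certA m 1 = m02 m.+1.
Proof.
have m0R := ler0n R m.
rewrite /certA certB_1 omega_1 /m12 /m02 -natr1.
by field; rewrite !(negbT (eqP _)) //; apply/eqP; lra.
Qed.

Lemma sumB_rec m K : sumB m K = mdiag m.+1 * sumB m.+1 K + m12 m.+1 - certB m K.+1.
Proof.
have tele : \sum_(1 <= k < K.+1) (beta m k - mdiag m.+1 * beta m.+1 k)
    = certB m 1 - certB m K.+1.
  rewrite (@telescope_sumr_eq _ 1 K.+1 (fun k => - certB m k)) ?opprK 1?addrC //.
  by move=> k /andP[k1 _]; rewrite beta_telescope //; ring.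
rewrite -certB_1 /sumB mulr_sumr -addrA -tele -big_split /=.
by apply: eq_bigr => k _; ring.
Qed.

Lemma sumA_rec m K :
  sumA m K = mdiag m.+1 * sumA m.+1 K + m01 m.+1 * sumB m.+1 K + m02 m.+1
             - certA m K.+1.
Proof.
have tele : \sum_(1 <= k < K.+1)
    (alpha m k - mdiag m.+1 * alpha m.+1 k - m01 m.+1 * beta m.+1 k)
    = certA m 1 - certA m K.+1.
  rewrite (@telescope_sumr_eq _ 1 K.+1 (fun k => - certA m k)) ?opprK 1?addrC //.
  by move=> k /andP[k1 _]; rewrite alpha_telescope //; ring.
rewrite -certA_1 /sumA /sumB !mulr_sumr -addrA -tele -!big_split /=.
by apply: eq_bigr => k _; ring.
Qed.

Lemma sumB0_expand N K :
  sumB 0 K = pdiag N * sumB N K + p12 N - \sum_(m < N) pdiag m * certB m K.+1.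
Proof.
elim: N => [|N IH]; first by rewrite big_ord0 /= mul1r !subr0 addr0.
by rewrite IH big_ord_recr /= (sumB_rec N K); ring.
Qed.

Lemma sumA0_expand N K :
  sumA 0 K = pdiag N * sumA N K + p01 N * sumB N K + p02 N
             - \sum_(m < N) (pdiag m * certA m K.+1 + p01 m * certB m K.+1).
Proof.
elim: N => [|N IH]; first by rewrite big_ord0 /= mul1r mul0r !subr0 !addr0.
by rewrite IH big_ord_recr /= (sumB_rec N K) (sumA_rec N K); ring.
Qed.

Lemma beta_bounds m k : (0 < k)%N -> 0 <= beta m k <= (k%:R ^+ 2)^-1.
Proof.
move=> k0; have k1R : (1 : R) <= k%:R by rewrite ler1n.
elim: m => [|m /andP[b0 b1]] /=.
  by rewrite lexx andbT invr_ge0 exprn_ge0.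
have m0R := ler0n R m.
set r := (_ / _).
have r0 : 0 <= r.
  by rewrite /r divr_ge0 // ?mulr_ge0 ?exprn_ge0 // -?natr1; lra.
have r1 : r <= 1.
  rewrite /r ler_pdivrMr; last by rewrite mulr_gt0 // ?exprn_gt0 // -?natr1; lra.
  rewrite mul1r -!natr1; nra.
by rewrite mulr_ge0 //= -[X in _ <= X]mulr1 ler_pM.
Qed.

Lemma omega_le1 m k : (0 < k)%N -> omega m k <= 1.
Proof.
move=> k0; have k1R : (1 : R) <= k%:R by rewrite ler1n.
elim: m => [|m IH] /=.
  by rewrite invf_le1 ?exprn_ege1 ?exprn_gt0 //; lra.
have m0R := ler0n R m.
suff : ((k%:R + m.+1%:R) ^+ 2)^-1 <= (m.+1%:R ^+ 2)^-1 :> R.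
  move: IH; generalize (omega m k) (((k%:R + m.+1%:R) ^+ 2)^-1 : R)
    ((m.+1%:R ^+ 2)^-1 : R) => w a b; lra.
rewrite lef_pV2 ?posrE ?exprn_gt0 // -?natr1; nra.
Qed.

Lemma omega_ge m k : (0 < k)%N -> 2 / (m%:R + 1) - 2 <= omega m k.
Proof.
move=> k0; have k1R : (1 : R) <= k%:R by rewrite ler1n.
elim: m => [|m IH] /=.
  by rewrite add0r divr1 subrr invr_ge0 exprn_ge0 //; lra.
have := inv_sq_le_telescope (ler0n R m).
have : 0 <= ((k%:R + m.+1%:R) ^+ 2)^-1 :> R by rewrite invr_ge0 exprn_ge0.
move: IH; rewrite -[m.+1%:R]natr1; lra.
Qed.

Lemma norm_omega_le2 m k : (0 < k)%N -> `|omega m k| <= 2.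
Proof.
move=> k0; have := omega_le1 m k k0; have := omega_ge m k k0.
have : 0 <= 2 / (m%:R + 1) :> R by apply: divr_ge0; have := ler0n R m; lra.
rewrite ler_norml; lra.
Qed.

Lemma norm_alpha_le m k : (0 < k)%N -> `|alpha m k| <= 2 * beta m k.
Proof.
move=> k0; have /andP[b0 _] := beta_bounds m k k0.
rewrite /alpha normrM (ger0_norm b0) mulrC.
by apply: ler_pM => //; exact: norm_omega_le2.
Qed.

Lemma certB_bounds m k : (0 < k)%N -> 0 <= certB m k <= (2 * m%:R + 2) / k%:R.
Proof.
move=> k0; have /andP[b0 bk] := beta_bounds m k k0.
have k1R : (1 : R) <= k%:R by rewrite ler1n.
have {}bk : beta m k * k%:R ^+ 2 <= 1.
  by rewrite -ler_pdivlMr ?mul1r // exprn_gt0 //; lra.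
have m0R := ler0n R m.
rewrite /certB; move: b0 bk.
set b := beta m k; set x : R := k%:R; set y : R := m%:R => b0 bk.
apply/andP; split.
  by rewrite divr_ge0 ?mulr_ge0 ?addr_ge0 ?divr_ge0 //; lra.
rewrite -subr_ge0.
have -> : (2 * y + 2) / x - b * (x + (3 * y + 1) / 2) / (2 * y + 1)
    = ((2 * y + 2) * (2 * y + 1) * 2 - b * x * (2 * x + 3 * y + 1))
      / (2 * x * (2 * y + 1)).
  by field; rewrite !(negbT (eqP _)) //; apply/eqP; lra.
apply: divr_ge0; last nra.
have bx : 0 <= b * x by apply: mulr_ge0 => //; lra.
have : b * x * (2 * x + 3 * y + 1) <= b * x * (x * (4 * y + 4)).
  by apply: ler_wpM2l => //; nra.
nra.
Qed.

Lemma norm_certA_le m k : (0 < k)%N -> `|certA m k| <= 2 * certB m k.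
Proof.
move=> k0; have /andP[g0 _] := certB_bounds m k k0.
rewrite /certA normrM (ger0_norm g0) mulrC.
by apply: ler_pM => //; exact: norm_omega_le2.
Qed.

Lemma sumB_bounds N K : 0 <= sumB N K <= 2.
Proof.
apply/andP; split.
  by rewrite /sumB big_nat sumr_ge0 // => k /andP[k1 _]; case/andP: (beta_bounds N k k1).
apply: le_trans (_ : \sum_(1 <= k < K.+1) (k%:R ^+ 2)^-1 <= _).
  by apply: ler_sum_nat => k /andP[k1 _]; case/andP: (beta_bounds N k k1).
apply: le_trans (sum_inv_sq_le R K) _.
have : 0 <= 2 / (K%:R + 1) :> R by apply: divr_ge0; have := ler0n R K; lra.
lra.
Qed.

Lemma norm_sumA_le4 N K : `|sumA N K| <= 4.
Proof.
apply: le_trans (ler_norm_sum _ _ _) _.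
apply: le_trans (_ : \sum_(1 <= k < K.+1) (2 * beta N k) <= _).
  by apply: ler_sum_nat => k /andP[k1 _]; exact: norm_alpha_le.
rewrite -mulr_sumr; have /andP[_] := sumB_bounds N K; rewrite /sumB; lra.
Qed.

Lemma pdiag_bounds N : 0 <= pdiag N /\ pdiag N * ((N%:R + 1) * (N%:R + 2)) <= 2.
Proof.
elim: N => [|N [d0 d1]] /=; first by split; lra.
have N0 := ler0n R N.
rewrite /mdiag -[N.+1%:R]natr1; split.
  by apply: mulr_ge0 => //; apply: divr_ge0; lra.
have -> : pdiag N * ((N%:R + 1) / (2 * (2 * (N%:R + 1) + 1)))
          * ((N%:R + 1 + 1) * (N%:R + 1 + 2))
    = pdiag N * ((N%:R + 1) * (N%:R + 2)) * ((N%:R + 3) / (4 * N%:R + 6)).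
  by field; rewrite !(negbT (eqP _)) //; apply/eqP; lra.
rewrite -[2 in X in _ <= X]mulr1; apply: ler_pM => //.
  by apply: mulr_ge0 => //; apply: mulr_ge0; lra.
by rewrite ler_pdivrMr; lra.
Qed.

Lemma p01_bounds N : 0 <= - p01 N <= 3 * N%:R * pdiag N.
Proof.
elim: N => [|N /andP[u0 u1]] /=; first by rewrite oppr0 lexx /= mulr0 mul0r.
have [d0 _] := pdiag_bounds N; have N0 := ler0n R N.
rewrite /mdiag /m01 -[N.+1%:R]natr1.
move: u0 u1 d0 N0; set u := - p01 N; set d := pdiag N; set n := N%:R => u0 u1 d0 N0.
have -> : - (d * (- 3 / (2 * (n + 1) * (2 * (n + 1) + 1)))
             + p01 N * ((n + 1) / (2 * (2 * (n + 1) + 1))))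
    = (3 * d + u * (n + 1) ^+ 2) / (2 * (n + 1) * (2 * n + 3)).
  by rewrite /u; field; rewrite !(negbT (eqP _)) //; apply/eqP; lra.
apply/andP; split.
  by rewrite divr_ge0 ?addr_ge0 ?mulr_ge0 ?exprn_ge0 //; nra.
rewrite -subr_ge0.
have -> : 3 * (n + 1) * (d * ((n + 1) / (2 * (2 * (n + 1) + 1))))
          - (3 * d + u * (n + 1) ^+ 2) / (2 * (n + 1) * (2 * n + 3))
    = (3 * d * ((n + 1) ^+ 3 - 1) - u * (n + 1) ^+ 2) / (2 * (n + 1) * (2 * n + 3)).
  by field; rewrite !(negbT (eqP _)) //; apply/eqP; lra.
apply: divr_ge0; last nra.
have : u * (n + 1) ^+ 2 <= 3 * n * d * (n + 1) ^+ 2.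
  by apply: ler_wpM2r => //; apply: exprn_ge0; lra.
have : 0 <= d * (n ^+ 2 + 2 * n) by apply: mulr_ge0 => //; nra.
nra.
Qed.

Lemma pdiag_le1 m : 0 <= pdiag m <= 1.
Proof.
have [d0 d1] := pdiag_bounds m; have m0R := ler0n R m.
by rewrite d0 /=; move: d0 d1; set d := pdiag m; nra.
Qed.

Lemma pdiag_le N : pdiag N <= 2 / (N%:R + 1).
Proof.
have [d0 d1] := pdiag_bounds N; have N0 := ler0n R N.
rewrite ler_pdivlMr; last lra.
by move: d0 d1; set d := pdiag N; nra.
Qed.

Lemma norm_p01_le3 m : `|p01 m| <= 3.
Proof.
have [d0 d1] := pdiag_bounds m; have m0R := ler0n R m.
have /andP[u0 u1] := p01_bounds m.
rewrite -normrN ger0_norm //.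
move: d0 d1 u0 u1; set d := pdiag m; set u := - p01 m => d0 d1 u0 u1.
have : m%:R * d <= 1 by nra.
nra.
Qed.

Lemma norm_p01_le N : `|p01 N| <= 6 / (N%:R + 1).
Proof.
have [d0 d1] := pdiag_bounds N; have N0 := ler0n R N.
have /andP[u0 u1] := p01_bounds N.
rewrite -normrN ger0_norm // ler_pdivlMr; last lra.
move: d0 d1 u0 u1; set d := pdiag N; set u := - p01 N => d0 d1 u0 u1.
have : N%:R * d * (N%:R + 1) <= 2 by nra.
nra.
Qed.

Lemma certB_le_trunc m N K : (m < N)%N -> 0 <= certB m K.+1 <= 2 * N%:R / (K%:R + 1).
Proof.
move=> mN; have /andP[g0 g1] := certB_bounds m K.+1 (ltn0Sn K).
rewrite g0 /=; apply: le_trans g1 _; rewrite -[K.+1%:R]natr1.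
apply: ler_wpM2r; first by rewrite invr_ge0; have := ler0n R K; lra.
have : (m.+1%:R : R) <= N%:R by rewrite ler_nat.
rewrite -[m.+1%:R]natr1; lra.
Qed.

Lemma norm_sumB0_sub_p12_le N K :
  `|sumB 0 K - p12 N| <= 4 / (N%:R + 1) + N%:R * (2 * N%:R / (K%:R + 1)).
Proof.
have -> : sumB 0 K - p12 N
    = pdiag N * sumB N K - \sum_(m < N) pdiag m * certB m K.+1.
  by rewrite (sumB0_expand N); ring.
apply: le_trans (ler_normB _ _) _; apply: lerD.
  have /andP[b0 b1] := sumB_bounds N K; have /andP[d0 _] := pdiag_le1 N.
  rewrite normrM !ger0_norm //.
  apply: le_trans (_ : 2 / (N%:R + 1) * 2 <= _); last by rewrite mulrAC -mulrA; lra.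
  by apply: ler_pM => //; exact: pdiag_le.
apply: (norm_sum_le_const (fun m => pdiag m * certB m K.+1)) => m mN.
have /andP[d0 d1] := pdiag_le1 m; have /andP[g0 g1] := certB_le_trunc m N K mN.
by rewrite normrM !ger0_norm // -[X in _ <= X]mul1r ler_pM.
Qed.

Lemma norm_sumA0_sub_p02_le N K :
  `|sumA 0 K - p02 N| <= 20 / (N%:R + 1) + N%:R * (5 * (2 * N%:R / (K%:R + 1))).
Proof.
have -> : sumA 0 K - p02 N
    = (pdiag N * sumA N K + p01 N * sumB N K)
      - \sum_(m < N) (pdiag m * certA m K.+1 + p01 m * certB m K.+1).
  by rewrite (sumA0_expand N); ring.
apply: le_trans (ler_normB _ _) _; apply: lerD.
  apply: le_trans (ler_normD _ _) _.
  have /andP[b0 b1] := sumB_bounds N K; have /andP[d0 _] := pdiag_le1 N.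
  rewrite !normrM (ger0_norm d0) (ger0_norm b0).
  have : pdiag N * `|sumA N K| <= 2 / (N%:R + 1) * 4.
    by apply: ler_pM => //; [exact: pdiag_le | exact: norm_sumA_le4].
  have : `|p01 N| * sumB N K <= 6 / (N%:R + 1) * 2.
    by apply: ler_pM => //; exact: norm_p01_le.
  set t := (N%:R + 1)^-1; lra.
apply: (norm_sum_le_const
  (fun m => pdiag m * certA m K.+1 + p01 m * certB m K.+1)) => m mN.
have /andP[d0 d1] := pdiag_le1 m; have /andP[g0 g1] := certB_le_trunc m N K mN.
apply: le_trans (ler_normD _ _) _; rewrite [`|pdiag m * _|]normrM [`|p01 m * _|]normrM.
have hA : `|pdiag m| * `|certA m K.+1| <= 1 * (2 * certB m K.+1).
  by apply: ler_pM => //; [rewrite ger0_norm | exact: norm_certA_le].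
have hB : `|p01 m| * `|certB m K.+1| <= 3 * certB m K.+1.
  by rewrite [`|certB _ _|]ger0_norm //; apply: ler_wpM2r => //; exact: norm_p01_le3.
move: hA hB g1; set g := certB m K.+1; set c := 2 * N%:R / (K%:R + 1).
set u := `|pdiag m| * _; set v := `|p01 m| * _; lra.
Qed.

End MarkovWZ.

Section Limits.
Variable R : realType.

Lemma sumB0E K : sumB R 0 K = \sum_(1 <= k < K.+1) ((k%:R : R) ^+ 2)^-1.
Proof. by []. Qed.

Lemma sumA0E K : sumA R 0 K = \sum_(1 <= k < K.+1) ((k%:R : R) ^+ 4)^-1.
Proof. by apply: eq_bigr => k _; rewrite /alpha /= -invfM -exprD. Qed.

Lemma norm_zeta2_sub_p12_le N : `|riemann_zeta (2 : R) - p12 R N| <= 4 / (N%:R + 1).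
Proof.
rewrite riemann_zeta_natE; apply: (@norm_limn_sub_le _ _ _ _ (N%:R * (2 * N%:R))).
  exact: (cvgn_sum_inv_pow R 0).
by move=> K /=; rewrite -sumB0E -mulrA; exact: norm_sumB0_sub_p12_le.
Qed.

Lemma norm_zeta4_sub_p02_le N : `|riemann_zeta (4 : R) - p02 R N| <= 20 / (N%:R + 1).
Proof.
rewrite riemann_zeta_natE; apply: (@norm_limn_sub_le _ _ _ _ (N%:R * (5 * (2 * N%:R)))).
  exact: (cvgn_sum_inv_pow R 2).
move=> K /=; rewrite -sumA0E.
have -> : N%:R * (5 * (2 * N%:R)) / (K%:R + 1) = N%:R * (5 * (2 * N%:R / (K%:R + 1))) :> R.
  by rewrite !mulrA.
exact: norm_sumA0_sub_p02_le.
Qed.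

Definition Pmat N : 'M[R]_3 := \matrix_(i < 3, j < 3)
  match nat_of_ord i, nat_of_ord j with
  | 0, 0 => pdiag R N | 0, 1 => p01 R N | 0, 2 => p02 R N
  | 1, 1 => pdiag R N | 1, 2 => p12 R N | 2, 2 => 1
  | _, _ => 0
  end.

Lemma prod_MmatE N : \prod_(1 <= n < N.+1) (Mmat n : 'M[R]_3) = Pmat N.
Proof.
elim: N => [|N IH].
  rewrite big_geq //; apply/matrixP => i j; rewrite !mxE.
  by case: i => [[|[|[|i]]] Hi]; case: j => [[|[|[|j]]] Hj].
rewrite big_nat_recr //= IH; apply/matrixP => i j.
rewrite -mulmxE !mxE !big_ord_recl big_ord0 !mxE /=.
case: i => [[|[|[|i]]] Hi]; case: j => [[|[|[|j]]] Hj] //=.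
all: rewrite /mdiag /m01 /m02 /m12; ring.
Qed.

End Limits.

Theorem mainTheorem3 (R : realType) :
  (fun N : nat => \prod_(1 <= n < N.+1) (Mmat n : 'M[R]_3)) @ \oo --> (Mlim : 'M[R]_3).
Proof.
apply: (@cvg_mx_rate _ _ _ _ _ 20) => N i j /=.
have N1 : 0 < N%:R + 1 :> R by rewrite natr1 ltr0n.
have rate_ge0 : 0 <= 20 / (N%:R + 1) :> R by rewrite divr_ge0 ?ltW.
have rate_le (c : R) : c <= 20 -> c / (N%:R + 1) <= 20 / (N%:R + 1).
  by move=> c20; rewrite ler_pM2r ?invr_gt0.
have /andP[d0 _] := pdiag_le1 R N.
have pdiag_rate : `|0 - pdiag R N| <= 20 / (N%:R + 1).
  rewrite sub0r normrN ger0_norm //; apply: le_trans (pdiag_le R N) (rate_le _ _); lra.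
rewrite prod_MmatE !mxE.
case: i => [[|[|[|i]]] Hi] //=; case: j => [[|[|[|j]]] Hj] //=; rewrite ?subrr ?normr0 //.
- rewrite sub0r normrN; apply: le_trans (norm_p01_le R N) (rate_le _ _); lra.
- exact: norm_zeta4_sub_p02_le.
- apply: le_trans (norm_zeta2_sub_p12_le R N) (rate_le _ _); lra.
Qed.
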